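(* Suppose $v_0=v^*$. Then for any two time steps $0\le a<b\le n$, $$\|P\widehat v_b-P\widehat v_a\|_2^2\le 50\cdot\alpha\cdot\log(\|v_b\|_2/\|v_a\|_2).$$
   Context: Setting: $\phi(x_1),\dots,\phi(x_n)\in\mathbb{R}^d$ are feature vectors of samples $x_1,\dots,x_n$; $\eta\in(0,0.1)$; $\beta\ge\alpha>0$; $v^*\in\mathbb{R}^d$ satisfies $\|v^*\|_2=1$, $\eta\sum_{i=1}^n\langle v^*,\phi(x_i)\rangle^2=\beta$, and $\eta\sum_{i=1}^n\langle w,\phi(x_i)\rangle^2\le\alpha$ for every $w$ with $\|w\|_2\le1$ and $\langle w,v^*\rangle=0$. $P=I-v^*(v^* )^\top$. The iterates are $v_i=v_{i-1}+\eta\langle\phi(x_i),v_{i-1}\rangle\phi(x_i)$ for $i\in[n]$, and $\widehat v_i=v_i/\|v_i\|_2$. $\log$ is the natural logarithm. *)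

From mathcomp Require Import all_boot all_order all_algebra.
From mathcomp Require Import all_classical all_reals all_analysis.
Set Implicit Arguments. Unset Strict Implicit. Unset Printing Implicit Defensive.
Import Order.TTheory GRing.Theory Num.Theory.
Local Open Scope ring_scope.

Section Defs.
Variables (R : realType) (d : nat).

Definition dotv (u w : 'rV[R]_d) : R := \sum_(i < d) u ord0 i * w ord0 i.
Definition norm2 (u : 'rV[R]_d) : R := Num.sqrt (dotv u u).

Definition projP (vs u : 'rV[R]_d) : 'rV[R]_d := u - (dotv vs u) *: vs.

(* Iterates: v_0 = v0, v_i = v_{i-1} + eta <phi(x_i), v_{i-1}> phi(x_i),
   where phi i is the feature vector phi(x_i) (used for i = 1..n). *)
Fixpoint iter_v (eta : R) (phi : nat -> 'rV[R]_d) (v0 : 'rV[R]_d) (i : nat)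
  : 'rV[R]_d :=
  match i with
  | 0 => v0
  | k.+1 => let vk := iter_v eta phi v0 k in
            vk + (eta * dotv (phi k.+1) vk) *: phi k.+1
  end.

Definition vhat (eta : R) (phi : nat -> 'rV[R]_d) (v0 : 'rV[R]_d) (i : nat)
  : 'rV[R]_d := (norm2 (iter_v eta phi v0 i))^-1 *: iter_v eta phi v0 i.

End Defs.

From mathcomp Require Import all_boot all_order all_algebra.
From mathcomp Require Import all_classical all_reals all_analysis.
From mathcomp Require Import ring lra.
Set Implicit Arguments. Unset Strict Implicit. Unset Printing Implicit Defensive.
Import Order.TTheory GRing.Theory Num.Theory.
Local Open Scope ring_scope.

(* Let u = P v^_b - P v^_a.  As u is orthogonal to v*, |u|^2 = <u, v_b>/|v_b| - <u, v_a>/|v_a|.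
   Step i adds eta h_i phi_i to the iterate, with h_i = <phi_i, v_(i-1)>, and raises |v|^2 by
   at least 2 eta h_i^2.  By Cauchy-Schwarz, <u, v> therefore moves between steps a and b by
   at most sqrt((|v_b|^2 - |v_a|^2)/2 * S), where S = eta sum_i <u, phi_i>^2 <= alpha |u|^2
   by the hypothesis on directions orthogonal to v*; likewise |<u, v_a>| is bounded, since
   <u, v_0> = 0.  Elementary algebra then gives
   |u|^2 <= 2 alpha (1 - |v_a|/|v_b|) <= 2 alpha log(|v_b|/|v_a|). *)

Lemma sqr_le_of_quadratic_ge0 (R : realFieldType) (a b c : R) : 0 <= a ->
  (forall t, 0 <= c - 2 * t * b + t ^+ 2 * a) -> b ^+ 2 <= c * a.
Proof.
move=> a_ge0 Hq; have [a0|a_neq0] := eqVneq a 0.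
  have [b0|b_neq0] := eqVneq b 0; first by rewrite a0 b0; lra.
  have := Hq ((c + 1) / (2 * b)).
  have -> : 2 * ((c + 1) / (2 * b)) * b = c + 1 by field; rewrite b_neq0.
  by rewrite a0; lra.
have a_gt0 : 0 < a by rewrite lt0r a_neq0.
have := Hq (b / a).
have -> : c - 2 * (b / a) * b + (b / a) ^+ 2 * a = (c * a - b ^+ 2) / a by field.
by rewrite pmulr_lge0 ?invr_gt0 // subr_ge0.
Qed.

Lemma cauchy_schwarz_sumr (R : realFieldType) (I : Type) (r : seq I) (f g : I -> R) :
  (\sum_(i <- r) f i * g i) ^+ 2 <= (\sum_(i <- r) f i ^+ 2) * (\sum_(i <- r) g i ^+ 2).
Proof.
apply: sqr_le_of_quadratic_ge0 => [|t]; first by apply: sumr_ge0 => i _; exact: sqr_ge0.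
have -> : \sum_(i <- r) f i ^+ 2 - 2 * t * (\sum_(i <- r) f i * g i) +
    t ^+ 2 * (\sum_(i <- r) g i ^+ 2) = \sum_(i <- r) (f i - t * g i) ^+ 2.
  rewrite !mulr_sumr -sumrN -!big_split /=.
  by apply: eq_bigr => i _; ring.
by apply: sumr_ge0 => i _; exact: sqr_ge0.
Qed.

Lemma sumr_nat_le_superrange (R : numDomainType) (F : nat -> R) m1 m2 m3 m4 :
  (m1 <= m2 <= m3)%N -> (m3 <= m4)%N -> (forall i, 0 <= F i) ->
  \sum_(m2 <= i < m3) F i <= \sum_(m1 <= i < m4) F i.
Proof.
move=> /andP[m12 m23] m34 F_ge0.
have sum_ge0 m m' : 0 <= \sum_(m <= i < m') F i by exact: sumr_ge0.
rewrite (big_cat_nat m12 (leq_trans m23 m34)) (big_cat_nat m23 m34) /=.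
by rewrite ler_wpDl // ler_wpDr.
Qed.

Lemma one_sub_div_le_ln (R : realType) (x y : R) : 0 < x -> 0 < y -> 1 - x / y <= ln (y / x).
Proof.
move=> x_gt0 y_gt0; have := @le_ln1Dx R (x / y - 1).
rewrite addrCA subrr addr0 ltrBDr addNr divr_gt0 // => /(_ isT).
by rewrite -invf_div lnV ?posrE ?divr_gt0 //; lra.
Qed.

Lemma gap_le_of_increments (R : realFieldType) (al A B N S Ea Eb : R) :
  0 <= al -> 1 <= A -> A <= B -> 0 <= N -> 0 <= S -> S <= al * N ->
  (Eb - Ea) ^+ 2 <= (B ^+ 2 - A ^+ 2) / 2 * S ->
  Ea ^+ 2 <= (A ^+ 2 - 1) / 2 * S ->
  N = Eb / B - Ea / A -> N <= 2 * al * (1 - A / B).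
Proof.
move=> al_ge0 A_ge1 AB N_ge0 S_ge0 SN Hab Ha HN.
have A_gt0 : 0 < A by lra.
have B_gt0 : 0 < B by lra.
set q := Ea / A.
have q_sqr : q ^+ 2 <= S / 2.
  rewrite expr_div_n ler_pdivrMr ?exprn_gt0 //; apply: (le_trans Ha); nra.
have NB : N * B = (Eb - Ea) - q * (B - A) by rewrite HN /q; field; lra.
have NB_sqr : (N * B) ^+ 2 <= 2 * (al * N) * B * (B - A).
  have : q ^+ 2 * (B - A) ^+ 2 <= S / 2 * (B - A) ^+ 2 by rewrite ler_wpM2r ?sqr_ge0.
  have : 0 <= (Eb - Ea + q * (B - A)) ^+ 2 by exact: sqr_ge0.
  have : 0 <= (al * N - S) * B * (B - A) by apply: mulr_ge0; nra.
  (* (x - y)^2 <= 2 x^2 + 2 y^2 with x = Eb - Ea and y = q (B - A) *)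
  rewrite NB; nra.
have [->|N_neq0] := eqVneq N 0; first by rewrite mulr_ge0 ?subr_ge0 ?ler_pdivrMr ?mul1r //; lra.
have N_gt0 : 0 < N by rewrite lt0r N_neq0.
have -> : 2 * al * (1 - A / B) = 2 * al * B * (B - A) / B ^+ 2 by field; lra.
rewrite ler_pdivlMr ?exprn_gt0 // -(ler_pM2l N_gt0).
have -> : N * (N * B ^+ 2) = (N * B) ^+ 2 by ring.
by have -> : N * (2 * al * B * (B - A)) = 2 * (al * N) * B * (B - A) by ring.
Qed.

Section InnerProduct.
Variables (R : realType) (d : nat).
Implicit Types (u w z : 'rV[R]_d) (k : R).

Lemma dotvC u w : dotv u w = dotv w u.
Proof. by apply: eq_bigr => i _; rewrite mulrC. Qed.

Lemma dotvDr u w z : dotv u (w + z) = dotv u w + dotv u z.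
Proof. by rewrite /dotv -big_split; apply: eq_bigr => i _; rewrite !mxE mulrDr. Qed.

Lemma dotvBr u w z : dotv u (w - z) = dotv u w - dotv u z.
Proof. by rewrite /dotv -sumrB; apply: eq_bigr => i _; rewrite !mxE mulrBr. Qed.

Lemma dotvZr u w k : dotv u (k *: w) = k * dotv u w.
Proof. by rewrite /dotv mulr_sumr; apply: eq_bigr => i _; rewrite !mxE mulrCA. Qed.

Lemma dotvDl u w z : dotv (w + z) u = dotv w u + dotv z u.
Proof. by rewrite dotvC dotvDr !(dotvC u). Qed.

Lemma dotvBl u w z : dotv (w - z) u = dotv w u - dotv z u.
Proof. by rewrite dotvC dotvBr !(dotvC u). Qed.

Lemma dotvZl u w k : dotv (k *: w) u = k * dotv w u.
Proof. by rewrite dotvC dotvZr dotvC. Qed.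

Lemma dotvv_ge0 u : 0 <= dotv u u.
Proof. by apply: sumr_ge0 => i _; rewrite -expr2 sqr_ge0. Qed.

Lemma sqr_norm2 u : norm2 u ^+ 2 = dotv u u.
Proof. by rewrite sqr_sqrtr ?dotvv_ge0. Qed.

Lemma norm2_ge0 u : 0 <= norm2 u.
Proof. exact: sqrtr_ge0. Qed.

Lemma sqr_dotv_le u w : dotv u w ^+ 2 <= norm2 u ^+ 2 * norm2 w ^+ 2.
Proof. by rewrite !sqr_norm2 /dotv -!(eq_bigr _ (fun i _ => expr2 _)) cauchy_schwarz_sumr. Qed.

Lemma norm2Z k u : norm2 (k *: u) = `|k| * norm2 u.
Proof. by rewrite /norm2 dotvZl dotvZr mulrA -expr2 sqrtrM ?sqr_ge0 // sqrtr_sqr. Qed.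

Lemma dotv_projP_l vs u : norm2 vs = 1 -> dotv (projP vs u) vs = 0.
Proof.
by move=> vs1; rewrite dotvBl dotvZl -sqr_norm2 vs1 expr1n mulr1 dotvC subrr.
Qed.

Lemma dotv_projP_r vs u w : dotv u vs = 0 -> dotv u (projP vs w) = dotv u w.
Proof. by move=> u_orth; rewrite dotvBr dotvZr (dotvC u) u_orth mulr0 subr0. Qed.

Lemma orth_sum_sqr_dotv_le (I : Type) (r : seq I) (f : I -> 'rV[R]_d) (eta alpha : R) vs z :
  (forall w, norm2 w <= 1 -> dotv w vs = 0 ->
     eta * (\sum_(i <- r) dotv w (f i) ^+ 2) <= alpha) ->
  dotv z vs = 0 ->
  eta * (\sum_(i <- r) dotv z (f i) ^+ 2) <= alpha * norm2 z ^+ 2.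
Proof.
move=> Hunit z_orth; set s := norm2 z.
have [s0|s_neq0] := eqVneq s 0.
  rewrite s0 expr0n mulr0 big1 ?mulr0 // => i _; apply/eqP; rewrite eq_le sqr_ge0 andbT.
  by rewrite (le_trans (sqr_dotv_le z (f i))) // -/s s0 expr0n mul0r.
have s_gt0 : 0 < s by rewrite lt0r s_neq0 norm2_ge0.
have := Hunit (s^-1 *: z).
rewrite norm2Z gtr0_norm ?invr_gt0 // mulVf // lexx dotvZl z_orth mulr0.
move=> /(_ erefl erefl).
have -> : \sum_(i <- r) dotv (s^-1 *: z) (f i) ^+ 2 = s ^- 2 * \sum_(i <- r) dotv z (f i) ^+ 2.
  by rewrite mulr_sumr; apply: eq_bigr => i _; rewrite dotvZl exprMn exprVn.
by rewrite mulrCA ler_pdivrMl ?exprn_gt0 // (mulrC alpha).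
Qed.

End InnerProduct.

Section Iterates.
Variables (R : realType) (d : nat) (eta : R) (phi : nat -> 'rV[R]_d) (v0 : 'rV[R]_d).
Local Notation v := (iter_v eta phi v0).

Definition step_coef i := dotv (phi i) (v i.-1).

Lemma dotv_iter_v z a k : (a <= k)%N ->
  dotv z (v k) = dotv z (v a) + eta * \sum_(a.+1 <= i < k.+1) step_coef i * dotv z (phi i).
Proof.
elim: k => [|k IHk]; first by rewrite leqn0 => /eqP->; rewrite big_geq // mulr0 addr0.
rewrite leq_eqVlt ltnS => /orP[/eqP->|ak]; first by rewrite big_geq // mulr0 addr0.
by rewrite big_nat_recr //= mulrDr addrA -IHk // dotvDr dotvZr mulrA.
Qed.

Lemma sqr_norm2_iter_v_ge a k : (a <= k)%N ->
  norm2 (v a) ^+ 2 + 2 * (eta * \sum_(a.+1 <= i < k.+1) step_coef i ^+ 2) <= norm2 (v k) ^+ 2.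
Proof.
elim: k => [|k IHk]; first by rewrite leqn0 => /eqP->; rewrite big_geq // !mulr0 addr0.
rewrite leq_eqVlt ltnS => /orP[/eqP->|ak]; first by rewrite big_geq // !mulr0 addr0.
rewrite big_nat_recr //= !sqr_norm2; have := IHk ak; rewrite !sqr_norm2 /step_coef /=.
rewrite dotvDr !dotvDl !dotvZr !dotvZl (dotvC (v k)).
set h := dotv (phi k.+1) (v k).
have : 0 <= (eta * h) ^+ 2 * dotv (phi k.+1) (phi k.+1).
  by rewrite mulr_ge0 ?sqr_ge0 ?dotvv_ge0.
nra.
Qed.

Hypothesis eta_ge0 : 0 <= eta.

Lemma norm2_iter_v_le a k : (a <= k)%N -> norm2 (v a) <= norm2 (v k).
Proof.
move=> /sqr_norm2_iter_v_ge growth; rewrite -ler_sqr ?nnegrE ?norm2_ge0 //.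
apply: le_trans growth.
by rewrite lerDl !mulr_ge0 // sumr_ge0 // => i _; rewrite sqr_ge0.
Qed.

Lemma sqr_dotv_iter_v_sub_le z a k : (a <= k)%N ->
  (dotv z (v k) - dotv z (v a)) ^+ 2 <=
  (norm2 (v k) ^+ 2 - norm2 (v a) ^+ 2) / 2 * (eta * \sum_(a.+1 <= i < k.+1) dotv z (phi i) ^+ 2).
Proof.
move=> ak; rewrite (dotv_iter_v z ak) addrC addKr.
set H := \sum_(a.+1 <= i < k.+1) step_coef i ^+ 2.
set G := \sum_(a.+1 <= i < k.+1) dotv z (phi i) ^+ 2.
have CS := cauchy_schwarz_sumr (index_iota a.+1 k.+1) step_coef (fun i => dotv z (phi i)).
have etaG_ge0 : 0 <= eta * G by rewrite mulr_ge0 // sumr_ge0 // => i _; rewrite sqr_ge0.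
have etaH_le : eta * H <= (norm2 (v k) ^+ 2 - norm2 (v a) ^+ 2) / 2.
  by have := sqr_norm2_iter_v_ge ak; rewrite -/H; lra.
apply: le_trans (_ : (eta * H) * (eta * G) <= _); last exact: ler_wpM2r.
have -> : eta * H * (eta * G) = eta ^+ 2 * (H * G) by ring.
by rewrite exprMn; apply: ler_wpM2l; rewrite ?sqr_ge0.
Qed.

Lemma sqr_dotv_iter_v_sub_le_sum z n a k : (a <= k)%N -> (k <= n)%N ->
  (dotv z (v k) - dotv z (v a)) ^+ 2 <=
  (norm2 (v k) ^+ 2 - norm2 (v a) ^+ 2) / 2 * (eta * \sum_(1 <= i < n.+1) dotv z (phi i) ^+ 2).
Proof.
move=> ak kn; apply: le_trans (sqr_dotv_iter_v_sub_le z ak) _.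
apply: ler_wpM2l.
  by rewrite divr_ge0 // subr_ge0 ler_sqr ?nnegrE ?norm2_ge0 ?norm2_iter_v_le.
by rewrite ler_wpM2l // sumr_nat_le_superrange // => i; rewrite sqr_ge0.
Qed.

End Iterates.

Theorem lemmaC2 (R : realType) (d n : nat) (phi : nat -> 'rV[R]_d)
    (eta alpha beta : R) (vstar : 'rV[R]_d) :
  0 < eta -> eta < 1 / 10 ->
  0 < alpha -> alpha <= beta ->
  norm2 vstar = 1 ->
  eta * (\sum_(1 <= i < n.+1) (dotv vstar (phi i)) ^+ 2) = beta ->
  (forall w : 'rV[R]_d, norm2 w <= 1 -> dotv w vstar = 0 ->
     eta * (\sum_(1 <= i < n.+1) (dotv w (phi i)) ^+ 2) <= alpha) ->
  forall a b : nat, (a < b)%N -> (b <= n)%N ->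
    norm2 (projP vstar (vhat eta phi vstar b) - projP vstar (vhat eta phi vstar a)) ^+ 2
    <= 50 * alpha * ln (norm2 (iter_v eta phi vstar b) / norm2 (iter_v eta phi vstar a)).
Proof.
move=> /ltW eta_ge0 _ /ltW alpha_ge0 _ vstar1 _ Horth a b ab bn.
set va := iter_v eta phi vstar a; set vb := iter_v eta phi vstar b.
set u := _ - _.
have A_ge1 : 1 <= norm2 va by rewrite -vstar1 (norm2_iter_v_le _ _ eta_ge0 (leq0n a)).
have AB : norm2 va <= norm2 vb by rewrite (norm2_iter_v_le _ _ eta_ge0 (ltnW ab)).
have u_orth : dotv u vstar = 0 by rewrite dotvBl !dotv_projP_l ?subrr.
have u_gap : norm2 u ^+ 2 = dotv u vb / norm2 vb - dotv u va / norm2 va.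
  by rewrite sqr_norm2 {2}/u dotvBr !dotv_projP_r // !dotvZr !(mulrC _^-1).
have S_le := orth_sum_sqr_dotv_le Horth u_orth.
set S := eta * _ in S_le.
have S_ge0 : 0 <= S by rewrite mulr_ge0 // sumr_ge0 // => i _; rewrite sqr_ge0.
have gap_ab := sqr_dotv_iter_v_sub_le_sum phi vstar eta_ge0 u (ltnW ab) bn.
have gap_0a := sqr_dotv_iter_v_sub_le_sum phi vstar eta_ge0 u (leq0n a) (ltnW (leq_trans ab bn)).
rewrite /= u_orth vstar1 subr0 expr1n -/S in gap_0a.
have := gap_le_of_increments alpha_ge0 A_ge1 AB (sqr_ge0 _) S_ge0 S_le gap_ab gap_0a u_gap.
have := one_sub_div_le_ln (lt_le_trans ltr01 A_ge1) (lt_le_trans ltr01 (le_trans A_ge1 AB)).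
have : 0 <= ln (norm2 vb / norm2 va) by rewrite ln_ge0 // ler_pdivlMr ?mul1r //; lra.
by clear -alpha_ge0; nra.
Qed.
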